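(* Let $\gamma\in[0,1]$, $\theta>0$, and let $\alpha,\beta_0,\beta$ be real numbers with $\alpha\ge-1$. Suppose $$\theta\ge\max\Big\{\beta,\ \frac{|\beta_0|\gamma+\beta}{1+\sqrt{1+\alpha}}\Big\}.$$ Then for all real $z_0,z_1,z_2$ satisfying $z_1\le0$, $z_2\le0$, $z_0+z_1+z_2\le0$ and $|z_0|\le2\gamma\sqrt{z_1z_2}$, one has $$p+\alpha+\beta_0z_0+\beta(z_1+z_2)\ge0,\qquad\text{where } p=(1-\theta z_1)(1-\theta z_2).$$ *)

From Stdlib Require Import Reals.
Open Scope R_scope.

From Stdlib Require Import Reals Lra Psatz.
Open Scope R_scope.

(* Write a = -z1, b = -z2, s = sqrt (z1 z2) and c = sqrt (1 + alpha), so that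
   p = 1 + theta (a + b) + theta^2 s^2.  Since a + b >= 2 s, theta >= beta and
   |beta0 z0| <= 2 |beta0| gamma s, the left-hand side is at least
   c^2 + theta^2 s^2 + 2 theta s - 2 (|beta0| gamma + beta) s, and the bound
   |beta0| gamma + beta <= theta (1 + c) turns this into (c - theta s)^2 >= 0. *)

Lemma two_sqrt_mul_le_add (a b : R) :
  0 <= a -> 0 <= b -> 2 * sqrt (a * b) <= a + b.
Proof.
  intros Ha Hb.
  rewrite sqrt_mult by assumption.
  pose proof (sqrt_sqrt a Ha); pose proof (sqrt_sqrt b Hb).
  pose proof (Rle_0_sqr (sqrt a - sqrt b)); unfold Rsqr in *.
  nra.
Qed.

Lemma Rmult_ge_opp_Rabs_bound (x z y : R) :
  Rabs z <= y -> - (Rabs x * y) <= x * z.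
Proof.
  intros Hzy.
  assert (Hxz : Rabs x * Rabs z <= Rabs x * y)
    by (apply Rmult_le_compat_l; [apply Rabs_pos | exact Hzy]).
  pose proof (Rle_abs (- (x * z))).
  rewrite Rabs_Ropp, Rabs_mult in *.
  lra.
Qed.

Lemma completed_square_lower_bound (theta c s K : R) :
  0 <= s -> K <= theta * (1 + c) ->
  0 <= c * c + theta * theta * (s * s) + 2 * theta * s - 2 * K * s.
Proof.
  intros Hs HK.
  pose proof (Rle_0_sqr (c - theta * s)); unfold Rsqr in *.
  nra.
Qed.

Theorem lemma1 (gamma theta alpha beta0 beta : R)
  (Hg0 : 0 <= gamma) (Hg1 : gamma <= 1) (Htheta : 0 < theta)
  (Halpha : -1 <= alpha)
  (Hth : theta >= Rmax beta ((Rabs beta0 * gamma + beta) / (1 + sqrt (1 + alpha)))) :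
  forall z0 z1 z2 : R,
    z1 <= 0 -> z2 <= 0 -> z0 + z1 + z2 <= 0 ->
    Rabs z0 <= 2 * gamma * sqrt (z1 * z2) ->
    (1 - theta * z1) * (1 - theta * z2) + alpha + beta0 * z0 + beta * (z1 + z2) >= 0.
Proof.
  intros z0 z1 z2 Hz1 Hz2 _ Hz0.
  set (K := Rabs beta0 * gamma + beta) in *.
  set (c := sqrt (1 + alpha)) in *.
  set (s := sqrt (z1 * z2)) in *.
  assert (Hcc : c * c = 1 + alpha) by (apply sqrt_sqrt; lra).
  assert (Hss : s * s = z1 * z2) by (apply sqrt_sqrt; nra).
  assert (Hc : 0 <= c) by apply sqrt_pos.
  assert (Hs : 0 <= s) by apply sqrt_pos.
  assert (Hbeta : beta <= theta) by (pose proof (Rmax_l beta (K / (1 + c))); lra).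
  assert (HK : K <= theta * (1 + c)).
  { pose proof (Rmax_r beta (K / (1 + c))).
    replace K with (K / (1 + c) * (1 + c)) by (field; lra).
    apply Rmult_le_compat_r; lra. }
  assert (Hsum : 2 * s <= - z1 - z2).
  { pose proof (two_sqrt_mul_le_add (- z1) (- z2) ltac:(lra) ltac:(lra)) as Hamgm.
    rewrite Rmult_opp_opp in Hamgm; fold s in Hamgm. lra. }
  pose proof (Rmult_ge_opp_Rabs_bound beta0 z0 _ Hz0) as Hlin.
  pose proof (completed_square_lower_bound theta c s K Hs HK) as Hsquare.
  assert (Hslack : 0 <= (theta - beta) * (- z1 - z2 - 2 * s)) by (apply Rmult_le_pos; lra).
  assert (Hprod : theta * theta * (s * s) = theta * theta * (z1 * z2)) by now rewrite Hss.
  unfold K in *; lra.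
Qed.
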